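(* Let $h\in\mathbb{R}$ with $h\neq 0$, and let $\{\mathcal{H}_t\colon t\in\mathbb{R}\}$ be the one-parameter group of helicoidal motions of $\mathbb{R}^3$ given by $\mathcal{H}_t(x,y,z)=(x\cos t-y\sin t,\ x\sin t+y\cos t,\ z+ht)$. Let $\vec{v}\in\mathbb{R}^3$ be a unit vector and $\alpha\in\mathbb{R}$ with $\alpha\neq 0$. Let $\Sigma$ be an orientable surface immersed in the half-space $\{p\in\mathbb{R}^3\colon\langle p,\vec{v}\rangle>0\}$ which is invariant by the helicoidal group, i.e. $\mathcal{H}_t(\Sigma)=\Sigma$ for all $t\in\mathbb{R}$. If $\Sigma$ is an $\alpha$-singular minimal surface with respect to $\vec{v}$, i.e. its mean curvature satisfies $H(p)=\alpha\frac{\langle N(p),\vec{v}\rangle}{\langle p,\vec{v}\rangle}$ for all $p\in\Sigma$, then the twist axis (the $z$-axis) is contained in the vector plane $\{p\in\mathbb{R}^3\colon\langle p,\vec{v}\rangle=0\}$ (in particular $\vec{v}$ is orthogonal to the $z$-axis), $\alpha=-1$, and $\Sigma$ is a circular cylinder about the $z$-axis.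
   Context: $\langle\cdot,\cdot\rangle$ is the Euclidean inner product on $\mathbb{R}^3$, $N$ is the unit normal vector of $\Sigma$, and the mean curvature $H$ is defined as the sum of the principal curvatures (computed with respect to $N$). The value $\alpha=0$ is excluded throughout the paper. The helicoidal surface is assumed to be generated by moving a regular planar curve $\gamma(s)=(x(s),0,z(s))$ by the motions $\mathcal{H}_t$, i.e. parametrized by $\Psi(s,t)=(x(s)\cos t,x(s)\sin t,z(s)+ht)$ with $x^2+h^2x'^2>0$. *)

From Stdlib Require Import Reals.
From Coquelicot Require Import Coquelicot.
Open Scope R_scope.

Record vec3 := V3 { vx : R; vy : R; vz : R }.

Definition dot (u w : vec3) : R := vx u * vx w + vy u * vy w + vz u * vz w.
Definition cross (u w : vec3) : vec3 :=
  V3 (vy u * vz w - vz u * vy w) (vz u * vx w - vx u * vz w) (vx u * vy w - vy u * vx w).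
Definition vnorm (u : vec3) : R := sqrt (dot u u).
Definition scal (k : R) (u : vec3) : vec3 := V3 (k * vx u) (k * vy u) (k * vz u).

Definition helicoidal_motion (h t : R) (p : vec3) : vec3 :=
  V3 (vx p * cos t - vy p * sin t) (vx p * sin t + vy p * cos t) (vz p + h * t).

Definition helicoidal_param (h : R) (x z : R -> R) (s t : R) : vec3 :=
  helicoidal_motion h t (V3 (x s) 0 (z s)).

Definition d_s (X : R -> R -> vec3) (s t : R) : vec3 :=
  V3 (Derive (fun u => vx (X u t)) s) (Derive (fun u => vy (X u t)) s)
     (Derive (fun u => vz (X u t)) s).
Definition d_t (X : R -> R -> vec3) (s t : R) : vec3 :=
  V3 (Derive (fun u => vx (X s u)) t) (Derive (fun u => vy (X s u)) t)
     (Derive (fun u => vz (X s u)) t).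

Definition unit_normal (X : R -> R -> vec3) (s t : R) : vec3 :=
  let n := cross (d_s X s t) (d_t X s t) in scal (/ vnorm n) n.

(* Mean curvature = sum of principal curvatures w.r.t. N:
   H = (eG - 2fF + gE)/(EG - F^2). *)
Definition mean_curvature (X : R -> R -> vec3) (s t : R) : R :=
  let Xs := d_s X s t in
  let Xt := d_t X s t in
  let N := unit_normal X s t in
  let E := dot Xs Xs in
  let F := dot Xs Xt in
  let G := dot Xt Xt in
  let e := dot (d_s (d_s X) s t) N in
  let f := dot (d_t (d_s X) s t) N in
  let g := dot (d_t (d_t X) s t) N in
  (e * G - 2 * f * F + g * E) / (E * G - F * F).

From Pilot Require Import Defs.
From Stdlib Require Import Reals.
From Coquelicot Require Import Coquelicot.
From Stdlib Require Import Lra Psatz FunctionalExtensionality.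
Open Scope R_scope.

(* Write [Psi(s,t) = (x cos t, x sin t, z + h t)].  The product of the mean
   curvature with [|Psi_s x Psi_t|] depends on [s] only; call it [K(s)].
   Multiplying the singular minimal equation by [|Psi_s x Psi_t| <Psi, v>]
   turns it, for fixed [s], into [A cos t + B sin t + C t + D = 0] on an
   interval of [t], so [A = B = C = D = 0].  These identities force
   [x x' = 0], hence [x' = 0]: [x] is a nonzero constant and [K = z' <> 0].
   Then [C = K h v_z] gives [v_z = 0], and [A, B] give [x z' (1 + alpha) = 0]. *)

Lemma Derive_plus_const (f : R -> R) (k s : R) :
  Derive (fun u => f u + k) s = Derive f s.
Proof.
  unfold Derive; f_equal; apply Lim_ext; intros e.
  now replace (f (s + e) + k - (f s + k)) with (f (s + e) - f s) by ring.
Qed.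

Lemma locally_open_interval (a b s : R) :
  a < s < b -> locally s (fun u => a < u < b).
Proof.
  intros Hs; apply (locally_interval _ s (Finite a) (Finite b)); simpl; try lra.
  intros u Hau Hub; simpl in *; lra.
Qed.

Lemma Derive_eq0_on_interval (f : R -> R) (a b s : R) :
  (forall u, a < u < b -> f u = 0) -> a < s < b -> Derive f s = 0.
Proof.
  intros Hf Hs.
  rewrite (Derive_ext_loc f (fun _ => 0)); [apply Derive_const|].
  exact (filter_imp _ _ Hf (locally_open_interval a b s Hs)).
Qed.

Lemma is_derive0_constant_on_interval (f : R -> R) (a b : R) :
  (forall u, a < u < b -> is_derive f u 0) ->
  forall s1 s2, a < s1 < b -> a < s2 < b -> f s1 = f s2.
Proof.
  intros Hf s1 s2 Hs1 Hs2.
  destruct (Rtotal_order s1 s2) as [Hlt|[->|Hgt]]; [| reflexivity |].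
  - apply eq_is_derive; [intros u Hu; apply Hf; lra | exact Hlt].
  - symmetry; apply eq_is_derive; [intros u Hu; apply Hf; lra | exact Hgt].
Qed.

(* [f^2] has derivative [2 f f' = 0], so it is constant: either [f] never
   vanishes, and then [f' = 0] pointwise, or [f] vanishes identically. *)
Lemma Derive_eq0_of_mul_Derive_eq0 (f : R -> R) (a b : R) :
  (forall s, a < s < b -> ex_derive f s) ->
  (forall s, a < s < b -> f s * Derive f s = 0) ->
  forall s, a < s < b -> Derive f s = 0.
Proof.
  intros Hd Hm s Hs.
  destruct (Req_dec (f s) 0) as [Hf0|Hf0];
    [| destruct (Rmult_integral _ _ (Hm s Hs)); [contradiction | assumption]].
  assert (Hsq : forall u, a < u < b -> f u ^ 2 = f s ^ 2).
  { intros u Hu.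
    apply (is_derive0_constant_on_interval (fun u => f u ^ 2) a b); [|assumption..].
    intros w Hw; auto_derive; [exact (Hd w Hw)|].
    specialize (Hm w Hw); change (Derive (fun x => f x) w) with (Derive f w); nra. }
  apply (Derive_eq0_on_interval f a b s); [|assumption].
  intros u Hu; specialize (Hsq u Hu); rewrite Hf0 in Hsq; nra.
Qed.

Lemma cos_sin_comb_eq0 (A B t e : R) :
  sin e <> 0 ->
  A * cos t + B * sin t = 0 -> A * cos (t + e) + B * sin (t + e) = 0 ->
  A = 0 /\ B = 0.
Proof.
  intros He H0 H1; rewrite cos_plus, sin_plus in H1.
  assert (Hrot : sin e * (B * cos t - A * sin t) = 0).
  { transitivity (A * (cos t * cos e - sin t * sin e) + B * (sin t * cos e + cos t * sin e)
                  - cos e * (A * cos t + B * sin t)); [ring | rewrite H0, H1; ring]. }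
  destruct (Rmult_integral _ _ Hrot) as [|Hperp]; [contradiction|].
  assert (Hcs : sin t ^ 2 = 1 - cos t ^ 2)
    by (rewrite <- (sin2_cos2 t); unfold Rsqr; ring).
  split.
  - transitivity (cos t * (A * cos t + B * sin t) - sin t * (B * cos t - A * sin t));
      [ring [Hcs] | rewrite H0, Hperp; ring].
  - transitivity (sin t * (A * cos t + B * sin t) + cos t * (B * cos t - A * sin t));
      [ring [Hcs] | rewrite H0, Hperp; ring].
Qed.

Lemma trig_affine_second_difference (A B C D t e : R) :
  let f u := A * cos u + B * sin u + C * u + D in
  f (t + e) + f (t - e) - 2 * f t = 2 * (cos e - 1) * (A * cos t + B * sin t).
Proof. intros f; unfold f; rewrite cos_plus, sin_plus, cos_minus, sin_minus; ring. Qed.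

(* Second differences kill the affine part [C t + D]; since [cos e < 1] for
   small [e > 0], this leaves [A cos + B sin = 0] on a smaller interval. *)
Lemma cos_sin_affine_independent (A B C D c d : R) :
  c < d ->
  (forall t, c < t < d -> A * cos t + B * sin t + C * t + D = 0) ->
  A = 0 /\ B = 0 /\ C = 0 /\ D = 0.
Proof.
  intros Hcd Hf.
  set (e := Rmin 1 ((d - c) / 8)).
  assert (He1 : e <= 1) by apply Rmin_l.
  assert (He2 : e <= (d - c) / 8) by apply Rmin_r.
  assert (He0 : 0 < e) by (apply Rmin_glb_lt; lra).
  assert (HPI := PI2_1).
  assert (Hsin : sin e <> 0) by (apply Rgt_not_eq, sin_gt_0; lra).
  assert (Hcos : cos e - 1 <> 0).
  { pose proof (cos_decreasing_1 0 e) as Hdec; rewrite cos_0 in Hdec.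
    apply Rlt_not_eq; lra. }
  assert (Hcomb : forall t, c < t - e -> t + e < d -> A * cos t + B * sin t = 0).
  { intros t Hl Hr.
    pose proof (trig_affine_second_difference A B C D t e) as H2; simpl in H2.
    rewrite (Hf (t + e)), (Hf (t - e)), (Hf t) in H2 by lra.
    assert (H : 2 * (cos e - 1) * (A * cos t + B * sin t) = 0) by lra.
    destruct (Rmult_integral _ _ H) as [H'|]; [|assumption].
    destruct (Rmult_integral _ _ H'); [lra | contradiction]. }
  set (m := (c + d) / 2).
  destruct (cos_sin_comb_eq0 A B m e Hsin) as [HA HB];
    [apply Hcomb; unfold m; lra .. |].
  subst A B.
  assert (Hm := Hf m ltac:(unfold m; lra)).
  assert (Hme := Hf (m + e) ltac:(unfold m; lra)).
  assert (HCe : C * e = 0).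
  { transitivity ((0 * cos (m + e) + 0 * sin (m + e) + C * (m + e) + D)
                  - (0 * cos m + 0 * sin m + C * m + D)); [ring | rewrite Hm, Hme; ring]. }
  destruct (Rmult_integral _ _ HCe) as [HC|]; [subst C | lra].
  repeat split; lra.
Qed.

Lemma dot_scal_l (k : R) (u w : vec3) : dot (Defs.scal k u) w = k * dot u w.
Proof. unfold dot, Defs.scal; simpl; ring. Qed.

Lemma dot_scal_r (k : R) (u w : vec3) : dot u (Defs.scal k w) = k * dot u w.
Proof. unfold dot, Defs.scal; simpl; ring. Qed.

Lemma norm_cross_mul_mean_curvature (X : R -> R -> vec3) (s t : R) :
  let n := cross (d_s X s t) (d_t X s t) in
  let E := dot (d_s X s t) (d_s X s t) in
  let F := dot (d_s X s t) (d_t X s t) in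
  let G := dot (d_t X s t) (d_t X s t) in
  vnorm n <> 0 ->
  vnorm n * mean_curvature X s t =
  (dot (d_s (d_s X) s t) n * G - 2 * dot (d_t (d_s X) s t) n * F
   + dot (d_t (d_t X) s t) n * E) / (E * G - F * F).
Proof.
  intros n E F G Hn.
  unfold mean_curvature, unit_normal; fold n E F G.
  rewrite !dot_scal_r.
  set (W := vnorm n) in *.
  unfold Rdiv.
  transitivity (W * / W * ((dot (d_s (d_s X) s t) n * G - 2 * dot (d_t (d_s X) s t) n * F
                 + dot (d_t (d_t X) s t) n * E) * / (E * G - F * F))); [ring|].
  rewrite Rinv_r by exact Hn; ring.
Qed.

Lemma singular_minimal_cross_form (X : R -> R -> vec3) (v : vec3) (alpha s t : R) :
  let n := cross (d_s X s t) (d_t X s t) in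
  vnorm n <> 0 -> dot (X s t) v <> 0 ->
  mean_curvature X s t = alpha * dot (unit_normal X s t) v / dot (X s t) v ->
  vnorm n * mean_curvature X s t * dot (X s t) v = alpha * dot n v.
Proof.
  intros n Hn Hp Heq.
  rewrite Heq; unfold unit_normal; fold n; rewrite dot_scal_l.
  field; split; assumption.
Qed.

Definition helicoid (k : R) (f g : R -> R) (s t : R) : vec3 :=
  V3 (f s * cos t) (f s * sin t) (g s + k * t).

Lemma helicoidal_param_helicoid (h : R) (x z : R -> R) :
  helicoidal_param h x z = helicoid h x z.
Proof.
  apply functional_extensionality; intros s; apply functional_extensionality; intros t.
  unfold helicoidal_param, helicoidal_motion, helicoid; simpl; f_equal; ring.
Qed.

Lemma helicoid_radius (k : R) (f g : R -> R) (s t : R) :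
  vx (helicoid k f g s t) ^ 2 + vy (helicoid k f g s t) ^ 2 = f s ^ 2.
Proof.
  unfold helicoid; cbn [vx vy].
  rewrite <- (Rmult_1_r (f s ^ 2)), <- (sin2_cos2 t); unfold Rsqr; ring.
Qed.

Lemma d_s_helicoid (k : R) (f g : R -> R) :
  d_s (helicoid k f g) = helicoid 0 (Derive f) (Derive g).
Proof.
  apply functional_extensionality; intros s; apply functional_extensionality; intros t.
  unfold d_s, helicoid; simpl; f_equal.
  - apply Derive_scal_l.
  - apply Derive_scal_l.
  - rewrite Derive_plus_const; ring.
Qed.

Lemma d_t_helicoid (k : R) (f g : R -> R) :
  d_t (helicoid k f g) = fun s t => V3 (- f s * sin t) (f s * cos t) k.
Proof.
  apply functional_extensionality; intros s; apply functional_extensionality; intros t.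
  unfold d_t, helicoid; simpl; f_equal; apply is_derive_unique; auto_derive; auto; ring.
Qed.

Lemma d_t_d_t_helicoid (k : R) (f g : R -> R) :
  d_t (d_t (helicoid k f g)) = fun s t => V3 (- f s * cos t) (- f s * sin t) 0.
Proof.
  rewrite d_t_helicoid.
  apply functional_extensionality; intros s; apply functional_extensionality; intros t.
  unfold d_t; simpl; f_equal; apply is_derive_unique; auto_derive; auto; ring.
Qed.

(* [|Psi_s x Psi_t| H] for the helicoid, in terms of [x, x', x'', z', z''] at [s]. *)
Definition helicoid_scaled_curvature (h X X1 X2 Z1 Z2 : R) : R :=
  let E := X1 * X1 + Z1 * Z1 in
  let F := Z1 * h in
  let G := X * X + h * h in
  let e := - X2 * Z1 * X + Z2 * X * X1 in
  let f := - X1 * X1 * h in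
  let g := X * X * Z1 in
  (e * G - 2 * f * F + g * E) / (E * G - F * F).

Lemma norm_cross_mul_mean_curvature_helicoid (h : R) (x z : R -> R) (s t : R) :
  let X := helicoid h x z in
  vnorm (cross (d_s X s t) (d_t X s t)) <> 0 ->
  vnorm (cross (d_s X s t) (d_t X s t)) * mean_curvature X s t =
  helicoid_scaled_curvature h (x s) (Derive x s) (Derive (Derive x) s)
    (Derive z s) (Derive (Derive z) s).
Proof.
  intros X Hn; rewrite (norm_cross_mul_mean_curvature X s t Hn).
  unfold X; rewrite d_t_d_t_helicoid, !d_s_helicoid, !d_t_helicoid.
  assert (Hcs : sin t ^ 2 = 1 - cos t ^ 2)
    by (rewrite <- (sin2_cos2 t); unfold Rsqr; ring).
  unfold helicoid_scaled_curvature, helicoid, dot, cross; simpl.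
  f_equal; ring [Hcs].
Qed.

Lemma helicoid_scaled_curvature_cylinder (h X Z1 Z2 : R) :
  X <> 0 -> Z1 <> 0 -> helicoid_scaled_curvature h X 0 0 Z1 Z2 = Z1.
Proof.
  intros HX HZ; unfold helicoid_scaled_curvature.
  field.
  replace (Z1 * Z1 * (X * X + h * h) - Z1 * h * (Z1 * h)) with ((Z1 * X) ^ 2) by ring.
  apply pow_nonzero, Rmult_integral_contrapositive; split; assumption.
Qed.

Lemma helicoid_singular_minimal_expansion (h alpha K : R) (x z : R -> R) (v : vec3) (s t : R) :
  let X := helicoid h x z in
  K * dot (X s t) v - alpha * dot (cross (d_s X s t) (d_t X s t)) v =
  (K * x s * vx v + alpha * (Derive z s * x s * vx v + Derive x s * h * vy v)) * cos t
  + (K * x s * vy v - alpha * (Derive x s * h * vx v - Derive z s * x s * vy v)) * sin t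
  + (K * h * vz v) * t
  + (K * z s * vz v - alpha * x s * Derive x s * vz v).
Proof.
  intros X; unfold X; rewrite d_s_helicoid, d_t_helicoid.
  assert (Hcs : sin t ^ 2 = 1 - cos t ^ 2)
    by (rewrite <- (sin2_cos2 t); unfold Rsqr; ring).
  unfold helicoid, dot, cross; simpl; ring [Hcs].
Qed.

Definition helicoid_coefficients_vanish (h alpha K X X1 Z Z1 : R) (v : vec3) : Prop :=
  K * X * vx v + alpha * (Z1 * X * vx v + X1 * h * vy v) = 0 /\
  K * X * vy v - alpha * (X1 * h * vx v - Z1 * X * vy v) = 0 /\
  K * h * vz v = 0 /\
  K * Z * vz v - alpha * X * X1 * vz v = 0.

Lemma helicoid_singular_minimal_coefficients (h alpha : R) (x z : R -> R) (v : vec3) (c d s : R) :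
  let X := helicoid h x z in
  c < d ->
  (forall t, c < t < d -> vnorm (cross (d_s X s t) (d_t X s t)) <> 0) ->
  (forall t, c < t < d -> dot (X s t) v > 0) ->
  (forall t, c < t < d ->
     mean_curvature X s t = alpha * dot (unit_normal X s t) v / dot (X s t) v) ->
  helicoid_coefficients_vanish h alpha
    (helicoid_scaled_curvature h (x s) (Derive x s) (Derive (Derive x) s)
       (Derive z s) (Derive (Derive z) s))
    (x s) (Derive x s) (z s) (Derive z s) v.
Proof.
  intros X Hcd Himm Hpos Heq.
  apply (cos_sin_affine_independent _ _ _ _ c d Hcd); intros t Ht.
  rewrite <- helicoid_singular_minimal_expansion; fold X.
  rewrite <- (norm_cross_mul_mean_curvature_helicoid h x z s t (Himm t Ht)); fold X.
  rewrite (singular_minimal_cross_form X v alpha s t (Himm t Ht)); [ring | |].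
  - apply Rgt_not_eq, Hpos, Ht.
  - apply Heq, Ht.
Qed.

(* The combination [C1 vy - C2 vx] is [alpha h X1 (vx^2 + vy^2)], while
   [C3] and [C4] give [alpha X X1 vz = 0]; as [|v| = 1], [X X1] vanishes. *)
Lemma helicoid_coefficients_radial (h alpha K X X1 Z Z1 : R) (v : vec3) :
  h <> 0 -> alpha <> 0 -> dot v v = 1 ->
  helicoid_coefficients_vanish h alpha K X X1 Z Z1 v -> X * X1 = 0.
Proof.
  unfold dot; intros Hh Ha Hv (C1 & C2 & C3 & C4).
  assert (Hplane : alpha * h * X1 * (1 - vz v ^ 2) = 0).
  { transitivity ((K * X * vx v + alpha * (Z1 * X * vx v + X1 * h * vy v)) * vy v
                  - (K * X * vy v - alpha * (X1 * h * vx v - Z1 * X * vy v)) * vx v).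
    - replace (1 - vz v ^ 2) with (vx v * vx v + vy v * vy v) by lra; ring.
    - rewrite C1, C2; ring. }
  assert (Hnormal : alpha * (X * X1 * vz v) = 0).
  { assert (HK : K * vz v = 0).
    { apply (Rmult_eq_reg_l h); [lra | assumption]. }
    transitivity (K * vz v * Z - (K * Z * vz v - alpha * X * X1 * vz v)); [ring|].
    rewrite HK, C4; ring. }
  assert (HX1 : X1 * (1 - vz v ^ 2) = 0).
  { apply (Rmult_eq_reg_l (alpha * h)); [lra | apply Rmult_integral_contrapositive; auto]. }
  assert (HXX1 : X * X1 * vz v = 0).
  { apply (Rmult_eq_reg_l alpha); [lra | assumption]. }
  transitivity (X * (X1 * (1 - vz v ^ 2)) + (X * X1 * vz v) * vz v); [ring|].
  rewrite HX1, HXX1; ring.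
Qed.

Lemma helicoid_coefficients_cylinder (h alpha X Z Z1 : R) (v : vec3) :
  h <> 0 -> X <> 0 -> Z1 <> 0 -> dot v v = 1 ->
  helicoid_coefficients_vanish h alpha Z1 X 0 Z Z1 v -> vz v = 0 /\ alpha = -1.
Proof.
  unfold dot; intros Hh HX HZ1 Hv (C1 & C2 & C3 & _).
  assert (Hvz : vz v = 0).
  { destruct (Rmult_integral _ _ C3) as [H|]; [|assumption].
    destruct (Rmult_integral _ _ H); contradiction. }
  split; [exact Hvz|].
  assert (Hv12 : vx v * vx v + vy v * vy v = 1) by (rewrite Hvz in Hv; lra).
  assert (H : Z1 * X * (1 + alpha) = 0).
  { transitivity (Z1 * X * (1 + alpha) * (vx v * vx v + vy v * vy v)); [rewrite Hv12; ring|].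
    transitivity ((Z1 * X * vx v + alpha * (Z1 * X * vx v + 0 * h * vy v)) * vx v
                  + (Z1 * X * vy v - alpha * (0 * h * vx v - Z1 * X * vy v)) * vy v); [ring|].
    rewrite C1, C2; ring. }
  destruct (Rmult_integral _ _ H) as [H'|]; [|lra].
  destruct (Rmult_integral _ _ H'); contradiction.
Qed.

Theorem theorem1 (h alpha : R) (v : vec3) (x z : R -> R) (a b c d : R) :
  h <> 0 ->
  alpha <> 0 ->
  dot v v = 1 ->
  a < b -> c < d ->
  (* gamma(s) = (x(s),0,z(s)) is a smooth regular planar curve on (a,b) *)
  (forall (n : nat) (s : R), a < s < b -> ex_derive_n x n s /\ ex_derive_n z n s) ->
  (forall s, a < s < b -> Derive x s <> 0 \/ Derive z s <> 0) ->
  (forall s, a < s < b -> x s ^ 2 + h ^ 2 * Derive x s ^ 2 > 0) ->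
  (* Psi is an immersion *)
  (forall s t, a < s < b -> c < t < d ->
     vnorm (cross (d_s (helicoidal_param h x z) s t) (d_t (helicoidal_param h x z) s t)) <> 0) ->
  (* Sigma lies in the open half-space <p,v> > 0 *)
  (forall s t, a < s < b -> c < t < d -> dot (helicoidal_param h x z s t) v > 0) ->
  (* alpha-singular minimal surface equation *)
  (forall s t, a < s < b -> c < t < d ->
     mean_curvature (helicoidal_param h x z) s t =
     alpha * dot (unit_normal (helicoidal_param h x z) s t) v
       / dot (helicoidal_param h x z s t) v) ->
  vz v = 0 /\ alpha = -1 /\
  exists r : R, r > 0 /\
    forall s t, a < s < b -> c < t < d ->
      vx (helicoidal_param h x z s t) ^ 2 + vy (helicoidal_param h x z s t) ^ 2 = r ^ 2.
Proof.
  intros Hh Ha Hv Hab Hcd Hsmooth Hreg Hx2 Himm Hpos Heq.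
  rewrite helicoidal_param_helicoid in *.
  assert (Hcoef : forall s, a < s < b ->
    helicoid_coefficients_vanish h alpha
      (helicoid_scaled_curvature h (x s) (Derive x s) (Derive (Derive x) s)
         (Derive z s) (Derive (Derive z) s))
      (x s) (Derive x s) (z s) (Derive z s) v).
  { intros s Hs; apply (helicoid_singular_minimal_coefficients h alpha x z v c d s Hcd);
      intros t Ht; auto. }
  assert (Hx1 : forall s, a < s < b -> Derive x s = 0).
  { apply Derive_eq0_of_mul_Derive_eq0.
    - intros s Hs; exact (proj1 (Hsmooth 1%nat s Hs)).
    - intros s Hs; exact (helicoid_coefficients_radial _ _ _ _ _ _ _ v Hh Ha Hv (Hcoef s Hs)). }
  assert (Hx0 : forall s, a < s < b -> x s <> 0).
  { intros s Hs Hxs; specialize (Hx2 s Hs); rewrite Hx1, Hxs in Hx2 by exact Hs; lra. }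
  assert (Hz1 : forall s, a < s < b -> Derive z s <> 0).
  { intros s Hs; destruct (Hreg s Hs) as [Hx1s|]; [now exfalso; apply Hx1s, Hx1 | assumption]. }
  set (m := (a + b) / 2); assert (Hm : a < m < b) by (unfold m; lra).
  assert (Hcyl := Hcoef m Hm).
  rewrite (Hx1 m Hm), (Derive_eq0_on_interval _ a b m Hx1 Hm),
    helicoid_scaled_curvature_cylinder in Hcyl by auto.
  destruct (helicoid_coefficients_cylinder h alpha _ _ _ v Hh (Hx0 m Hm) (Hz1 m Hm) Hv Hcyl)
    as [Hvz Halpha].
  split; [exact Hvz | split; [exact Halpha|]].
  exists (Rabs (x m)); split; [apply Rabs_pos_lt, Hx0, Hm|].
  intros s t Hs Ht; rewrite helicoid_radius, pow2_abs; f_equal.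
  apply (is_derive0_constant_on_interval x a b); [|exact Hs | exact Hm].
  intros u Hu; rewrite <- (Hx1 u Hu); apply Derive_correct, (Hsmooth 1%nat u Hu).
Qed.
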